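(* Let $n\ge 3$, let $1\le i<j\le n$, and let $K$ be the $(i,j)$-coordinate coloring of $H_2(n,n-1)$, i.e. $K(x)=(x_i,x_j)\in\mathbb{Z}_2^2$. Then the set of transition edges of $K$ is exactly $\{(x,y): x+y\in\{f_i,f_j\}\}$, and $\mathrm{rb}(K)=\frac{2}{n+1}$. As a consequence, the maximum of $\mathrm{rb}(K')$ over all proper $4$-colorings $K'$ of $H_2(n,n-1)$ equals $\frac{2}{n+1}$.
   Context: $H_2(n,n-1)$ is the simple undirected graph with vertex set $\mathbb{Z}_2^n$ in which $x,y$ are adjacent iff their Hamming distance $|\{i:x_i\ne y_i\}|$ is at least $n-1$. $e_k$ denotes the $k$-th standard basis vector of $\mathbb{Z}_2^n$, $\mathbb{1}$ the all-ones vector, and $f_k=e_k+\mathbb{1}$. For a simple graph $G=(V,E)$ and a proper $k$-coloring $K$, an edge $(x,y)\in E$ is a transition edge for $K$ if swapping the colors of $x$ and $y$ (all other colors unchanged) yields again a proper $k$-coloring; $T(K)$ is the set of transition edges and $\mathrm{rb}(K)=|T(K)|/|E|$ is the robustness. *)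

From mathcomp Require Import all_boot all_order all_algebra.
Set Implicit Arguments. Unset Strict Implicit. Unset Printing Implicit Defensive.
Import GRing.Theory Num.Theory.
Local Open Scope ring_scope.

Definition vtx (n : nat) := 'rV['F_2]_n.

Definition hamming n (x y : vtx n) : nat := #|[set k : 'I_n | x 0 k != y 0 k]|.

Definition H2 n : rel (vtx n) := fun x y => (n.-1 <= hamming x y)%N.

Definition ev n (k : 'I_n) : vtx n := delta_mx 0 k.
Definition onev n : vtx n := const_mx 1.
Definition fv n (k : 'I_n) : vtx n := ev k + onev n.

Section Coloring.
Variables (T : finType) (C : eqType) (e : rel T).

Definition proper_col (K : T -> C) : bool :=
  [forall x, forall y, e x y ==> (K x != K y)].

Definition swapcol (K : T -> C) (x y : T) : T -> C :=
  fun z => if z == x then K y else if z == y then K x else K z.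

(* edges, as (ordered) pairs (x,y) with x ~ y *)
Definition edges : {set T * T} := [set p | e p.1 p.2].

Definition transition_edges (K : T -> C) : {set T * T} :=
  [set p | e p.1 p.2 & proper_col (swapcol K p.1 p.2)].

Definition rb (K : T -> C) : rat :=
  (#|transition_edges K|)%:R / (#|edges|)%:R.
End Coloring.

Definition coordcol n (i j : 'I_n) (x : vtx n) : 'F_2 * 'F_2 := (x 0 i, x 0 j).

From mathcomp Require Import all_boot all_order all_algebra.
From mathcomp Require Import zify.
Set Implicit Arguments. Unset Strict Implicit. Unset Printing Implicit Defensive.
Import GRing.Theory Num.Theory.
Local Open Scope ring_scope.

(* Two vertices of H_2(n,n-1) are adjacent iff they agree in at most one
   coordinate, so the neighbours of x are x + 1 and the n vertices x + f_k.
   For the (i,j)-coordinate colouring, the swap along an edge (x, x + f_m)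
   stays proper exactly when m is i or j: then x + f_m is the only neighbour
   of x with its colour.  This gives 2 transition neighbours at every vertex
   out of n + 1 neighbours.  Conversely, for any proper 4-colouring, the
   transition neighbours y of x carry pairwise distinct colours, distinct from
   that of x and from that of any non-transition neighbour of x; as x has
   n + 1 >= 4 neighbours, at most 4 - 2 = 2 of them are transition
   neighbours. *)

Lemma F2_cases (a : 'F_2) : a = 0 \/ a = 1.
Proof.
case: a => -[|[|m]] lt_m2; [left | right |]; try exact: val_inj.
by move: lt_m2; vm_compute.
Qed.

Lemma F2_addr_eq1 (a b : 'F_2) (c : bool) : (a + b == c%:R + 1) = ((a == b) == c).
Proof. by case: c; case: (F2_cases a) => ->; case: (F2_cases b) => ->. Qed.

Lemma F2_neq_addr1 (a : 'F_2) : (a == a + 1) = false.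
Proof. by case: (F2_cases a) => ->. Qed.

Lemma F2_flip (a b : 'F_2) : (if a == b then a else a + 1) = b.
Proof. by case: (F2_cases a) => ->; case: (F2_cases b) => ->; apply/eqP. Qed.

Lemma F2_eq_of_neq (a b c : 'F_2) : a != b -> a != c -> b = c.
Proof. by case: (F2_cases a) => ->; case: (F2_cases b) => ->; case: (F2_cases c) => ->. Qed.

Section Colouring.
Variables (T : finType) (C : eqType) (e : rel T).

Lemma proper_colP (K : T -> C) :
  reflect (forall x y, e x y -> K x != K y) (proper_col e K).
Proof.
apply: (iffP forallP) => [properK x y | properK x].
  by move/(_ x)/forallP/(_ y)/implyP: properK.
by apply/forallP => y; apply/implyP; apply: properK.
Qed.

Lemma swapcol_comp (D : eqType) (g : C -> D) (K : T -> C) x y :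
  swapcol (g \o K) x y =1 g \o swapcol K x y.
Proof. by move=> z; rewrite /swapcol /=; case: ifP => _; [|case: ifP]. Qed.

Lemma proper_col_comp (D : eqType) (g : C -> D) (K : T -> C) :
  injective g -> proper_col e (g \o K) = proper_col e K.
Proof.
by move=> inj_g; apply: eq_forallb => x; apply: eq_forallb => y; rewrite /= inj_eq.
Qed.

Lemma transition_edges_comp (D : eqType) (g : C -> D) (K : T -> C) :
  injective g -> transition_edges e (g \o K) = transition_edges e K.
Proof.
move=> inj_g; apply/setP => -[x y]; rewrite !inE -(proper_col_comp _ inj_g).
congr (_ && _); apply: eq_forallb => u; apply: eq_forallb => v.
by rewrite !swapcol_comp.
Qed.

Lemma rb_comp (D : eqType) (g : C -> D) (K : T -> C) :
  injective g -> rb e (g \o K) = rb e K.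
Proof. by move=> inj_g; rewrite /rb transition_edges_comp. Qed.

Hypotheses (e_sym : symmetric e) (e_irr : irreflexive e).

Lemma neq_of_adj x z : e x z -> z != x.
Proof. by apply: contraTneq => ->; rewrite e_irr. Qed.

Lemma transition_colour_unique (K : T -> C) x y z :
  (x, y) \in transition_edges e K -> e x z -> z != y -> K z != K y.
Proof.
rewrite inE => /andP [_ /proper_colP swap_proper] exz nzy.
have := swap_proper x z exz.
by rewrite /swapcol eqxx (negbTE (neq_of_adj exz)) (negbTE nzy) eq_sym.
Qed.

Lemma swapcol_proper (K : T -> C) x y :
  proper_col e K ->
  (forall z, e x z -> z != y -> K z != K y) ->
  (forall z, e y z -> z != x -> K z != K x) ->
  proper_col e (swapcol K x y).
Proof.
move=> /proper_colP properK unique_y unique_x.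
apply/proper_colP => u v euv; have evu : e v u by rewrite e_sym.
rewrite /swapcol; case: (eqVneq u x) => [eux | nux]; last case: (eqVneq u y) => [euy | nuy].
- subst u; rewrite (negbTE (neq_of_adj euv)).
  case: (eqVneq v y) => [evy | nvy]; first by subst v; rewrite eq_sym properK.
  by rewrite eq_sym unique_y.
- subst u; rewrite (negbTE (neq_of_adj euv)).
  case: (eqVneq v x) => [evx | nvx]; first by subst v; rewrite properK.
  by rewrite eq_sym unique_x.
- case: (eqVneq v x) => [evx | nvx]; first by subst v; rewrite unique_y.
  case: (eqVneq v y) => [evy | nvy]; first by subst v; rewrite unique_x.
  exact: properK.
Qed.

End Colouring.

Lemma card_transition_nbhd (T C : finType) (e : rel T) (K : T -> C) x :
  irreflexive e -> proper_col e K -> (#|C| <= #|[set y | e x y]|)%N ->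
  (#|[set y | (x, y) \in transition_edges e K]| + 2 <= #|C|)%N.
Proof.
move=> e_irr properK le_C_deg; have /proper_colP Kneq := properK; set S := [set y | _].
have adj_S y : y \in S -> e x y by rewrite !inE => /andP [].
have inj_K : {in S &, injective K}.
  move=> y1 y2 Sy1 Sy2 eqK; apply/eqP/negPn/negP => ny12.
  rewrite inE in Sy2.
  by have := transition_colour_unique e_irr Sy2 (adj_S _ Sy1) ny12; rewrite eqK eqxx.
have card_KS : #|K @: S| = #|S| := card_in_imset inj_K.
have KS_Kx : K @: S \subset ~: [set K x].
  apply/subsetP => _ /imsetP [y Sy ->]; rewrite !inE eq_sym.
  exact: (Kneq _ _ (adj_S _ Sy)).
have [z nbr_z notS_z] : exists2 z, z \in [set y | e x y] & z \notin S.
  apply/subsetPn/negP => /subset_leq_card le_deg_S.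
  have C_gt0 : (0 < #|C|)%N by apply/card_gt0P; exists (K x).
  have := subset_leq_card KS_Kx; rewrite cardsC1 card_KS; lia.
rewrite inE in nbr_z.
have KS_Kxz : K @: S \subset ~: [set K x; K z].
  apply/subsetP => _ /imsetP [y Sy ->]; rewrite !inE negb_or.
  rewrite eq_sym (Kneq _ _ (adj_S _ Sy)) /= eq_sym.
  rewrite inE in Sy; apply: (transition_colour_unique e_irr Sy nbr_z).
  by apply: contraNneq notS_z => ->; rewrite inE.
have := subset_leq_card KS_Kxz; have := cardsC [set K x; K z].
by rewrite card_KS cards2 (Kneq _ _ nbr_z); lia.
Qed.

Section PairCounting.
Variable T : finType.

Lemma card_pairs (A : {set T * T}) :
  #|A| = (\sum_x #|[set y | (x, y) \in A]|)%N.
Proof.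
under eq_bigr => x _ do rewrite -sum1_card.
by rewrite pair_big_dep -sum1_card; apply: eq_bigl => -[x y]; rewrite !inE.
Qed.

Lemma card_pairs_const (A : {set T * T}) c :
  (forall x, #|[set y | (x, y) \in A]| = c) -> #|A| = (#|T| * c)%N.
Proof. by move=> cA; rewrite card_pairs (eq_bigr _ (fun x _ => cA x)) sum_nat_const. Qed.

Lemma card_pairs_le (A : {set T * T}) c :
  (forall x, #|[set y | (x, y) \in A]| <= c)%N -> (#|A| <= #|T| * c)%N.
Proof. by move=> cA; rewrite card_pairs -sum_nat_const leq_sum. Qed.

End PairCounting.

Lemma natr_div_mul2l (R : numFieldType) (N a b : nat) :
  (0 < N)%N -> (N * a)%:R / (N * b)%:R = a%:R / b%:R :> R.
Proof. by move=> N_gt0; rewrite !natrM -mulf_div divff ?mul1r // pnatr_eq0 -lt0n. Qed.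

Section RegularRobustness.
Variables (T : finType) (e : rel T) (d : nat).
Hypothesis e_regular : forall x, #|[set y | e x y]| = d.

Lemma card_edges_regular : #|edges e| = (#|T| * d)%N.
Proof.
by apply: card_pairs_const => x; rewrite -(e_regular x); apply: eq_card => y; rewrite !inE.
Qed.

Lemma rb_regular (C : eqType) (K : T -> C) t :
  (0 < #|T|)%N -> (forall x, #|[set y | (x, y) \in transition_edges e K]| = t) ->
  rb e K = t%:R / d%:R.
Proof.
move=> T_gt0 transition_t.
by rewrite /rb card_edges_regular (card_pairs_const transition_t) natr_div_mul2l.
Qed.

Lemma rb_le_regular (C : finType) (K : T -> C) :
  irreflexive e -> proper_col e K -> (#|C| <= d)%N ->
  rb e K <= (#|C| - 2)%:R / d%:R.
Proof.
move=> e_irr properK le_C_d; rewrite /rb card_edges_regular.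
have [T0 | T_gt0] := posnP #|T|.
  by rewrite T0 mul0n invr0 mulr0 divr_ge0 ?ler0n.
rewrite -[X in _ <= X](natr_div_mul2l _ _ _ T_gt0) ler_wpM2r ?invr_ge0 // ler_nat.
apply: card_pairs_le => x.
have := card_transition_nbhd (x := x) e_irr properK; rewrite e_regular => /(_ le_C_d).
lia.
Qed.

End RegularRobustness.

Lemma card_le1_set1 (T : finType) (S : {set T}) m :
  (#|S| <= 1)%N -> m \in S -> S = [set m].
Proof. by move=> le_S1 Sm; apply/eqP; rewrite eq_sym eqEcard sub1set Sm cards1. Qed.

Lemma card_subsets_le1 (T : finType) : #|[set S : {set T} | #|S| <= 1]%N| = #|T|.+1.
Proof.
have -> : [set S : {set T} | #|S| <= 1]%N
    = [set S : {set T} | #|S| == 0%N] :|: [set S : {set T} | #|S| == 1%N].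
  by apply/setP => S; rewrite !inE; case: #|S| => [|[|m]].
rewrite cardsU (_ : _ :&: _ = set0) ?cards0 ?subn0 ?card_draws ?bin0 ?bin1 //.
by apply/setP => S; rewrite !inE; case: #|S| => [|[|m]].
Qed.

Section Agreement.
Variable n : nat.
Implicit Types (x y z : vtx n) (S : {set 'I_n}).

Definition agree x y : {set 'I_n} := [set k | x 0 k == y 0 k].

Definition flip x S : vtx n := \row_k (if k \in S then x 0 k else x 0 k + 1).

Lemma agree_flip x S : agree x (flip x S) = S.
Proof.
by apply/setP => k; rewrite !inE mxE; case: (k \in S); rewrite ?eqxx ?F2_neq_addr1.
Qed.

Lemma flip_agree x y : flip x (agree x y) = y.
Proof. by apply/rowP => k; rewrite mxE inE F2_flip. Qed.

Lemma agreeC x y : agree x y = agree y x.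
Proof. by apply/setP => k; rewrite !inE eq_sym. Qed.

Lemma agreexx x : agree x x = setT.
Proof. by apply/setP => k; rewrite !inE eqxx. Qed.

Lemma card_agree x (P : pred {set 'I_n}) :
  #|[set y | P (agree x y)]| = #|[set S | P S]|.
Proof.
rewrite -(card_imset _ (can_inj (agree_flip x))); apply: eq_card => y.
rewrite inE; apply/idP/imsetP => [Py | [S PS ->]].
  by exists (agree x y); rewrite ?inE ?flip_agree.
by rewrite agree_flip; rewrite inE in PS.
Qed.

Lemma addr_eq_fv x y k : (x + y == fv k) = (agree x y == [set k]).
Proof.
apply/eqP/eqP => [/rowP sum_xy | agree_xy].
  by apply/setP => l; have := sum_xy l; rewrite !mxE !inE => /eqP; rewrite F2_addr_eq1 => /eqP.
apply/rowP => l; rewrite !mxE; apply/eqP; rewrite F2_addr_eq1.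
by have := congr1 (fun S => l \in S) agree_xy; rewrite !inE => ->.
Qed.

Lemma H2_agree x y : H2 x y = (#|agree x y| <= 1)%N.
Proof.
rewrite /H2 /hamming (_ : [set k | _] = ~: agree x y); last first.
  by apply/setP => k; rewrite !inE.
rewrite cardsCs setCK card_ord -subn1.
have := subset_leq_card (subsetT (agree x y)); rewrite cardsT card_ord.
by move: #|agree x y| => a le_a_n; apply/idP/idP; lia.
Qed.

Lemma H2_sym : symmetric (@H2 n).
Proof. by move=> x y; rewrite !H2_agree agreeC. Qed.

Lemma H2_irrefl : (1 < n)%N -> irreflexive (@H2 n).
Proof. by move=> n_gt1 x; rewrite H2_agree agreexx cardsT card_ord leqNgt n_gt1. Qed.

Lemma card_H2_nbhd x : #|[set y | H2 x y]| = n.+1.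
Proof.
rewrite -[X in _ = X.+1](card_ord n) -card_subsets_le1 -(card_agree x (fun S => #|S| <= 1)%N).
by apply: eq_card => y; rewrite !inE H2_agree.
Qed.

Lemma H2_agree1_neq x y z m :
  agree x y = [set m] -> H2 x z -> z != y -> y 0 m != z 0 m.
Proof.
move=> agree_xy; rewrite H2_agree => xz; apply: contra => /eqP eq_yz.
have m_xz : m \in agree x z.
  by rewrite inE; have := set11 m; rewrite -agree_xy inE eq_yz.
apply/eqP; rewrite -(flip_agree x z) -(flip_agree x y) agree_xy.
by rewrite (card_le1_set1 xz m_xz).
Qed.

End Agreement.

Section CoordinateColouring.
Variables (n : nat) (i j : 'I_n).
Hypothesis neq_ij : i != j.

Let n_gt1 : (1 < n)%N.
Proof.
rewrite ltnNge; apply: contra neq_ij => le_n1; apply/eqP/ord_inj.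
by move: (ltn_ord i) (ltn_ord j); lia.
Qed.

Lemma coordcol_neq (x y : vtx n) m :
  m \in [set i; j] -> x 0 m != y 0 m -> coordcol i j x != coordcol i j y.
Proof.
by case/set2P=> -> neq_xy; apply: contra neq_xy => /eqP [eq_i eq_j]; rewrite ?eq_i ?eq_j.
Qed.

Lemma coordcol_proper : proper_col (@H2 n) (coordcol i j).
Proof.
apply/proper_colP => x y; rewrite H2_agree; apply: contraTneq => -[eq_i eq_j].
have : [set i; j] \subset agree x y by apply/subsetP => k /set2P [] ->; rewrite inE ?eq_i ?eq_j.
by move/subset_leq_card; rewrite cards2 neq_ij -ltnNge.
Qed.

Lemma coordcol_swapcol_proper (x y : vtx n) m :
  m \in [set i; j] -> agree x y = [set m] ->
  proper_col (@H2 n) (swapcol (coordcol i j) x y).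
Proof.
move=> m_ij agree_xy; have agree_yx : agree y x = [set m] by rewrite agreeC.
apply: (swapcol_proper (@H2_sym n) (H2_irrefl n_gt1) coordcol_proper) => z xz nzy;
  rewrite eq_sym (coordcol_neq m_ij) //.
  exact: H2_agree1_neq agree_xy xz nzy.
exact: H2_agree1_neq agree_yx xz nzy.
Qed.

Lemma exists_nbr_same_coordcol (x y : vtx n) : (2 < n)%N ->
  H2 x y -> agree x y \notin [set [set i]; [set j]] ->
  exists z, [/\ H2 x z, z != y & coordcol i j z = coordcol i j y].
Proof.
rewrite H2_agree => n_gt2 xy not_ij.
have notin_xy m : m \in [set i; j] -> m \notin agree x y.
  move=> m_ij; apply: contra not_ij => m_xy.
  by move: m_ij; rewrite (card_le1_set1 xy m_xy) !inE !(inj_eq set1_inj).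
have [k] : exists k, k \in ~: [set i; j].
  by apply/card_gt0P; rewrite cardsCs setCK cards2 neq_ij card_ord; lia.
rewrite inE => notin_ij.
pose S := if agree x y == set0 then [set k] else set0.
have notin_xz m : m \in [set i; j] -> m \notin agree x (flip x S).
  rewrite agree_flip /S => m_ij; case: ifP => _; rewrite !inE //.
  by apply: contraNneq notin_ij => <-.
exists (flip x S); split.
- by rewrite H2_agree agree_flip /S; case: ifP; rewrite ?cards1 ?cards0.
- apply/eqP => eq_zy; have := agree_flip x S; rewrite eq_zy /S.
  case: eqP => [-> /setP/(_ k) | /eqP neq0 eq0]; first by rewrite !inE eqxx.
  by rewrite eq0 eqxx in neq0.
have eq_at m : m \in [set i; j] -> flip x S 0 m = y 0 m.
  move=> m_ij; have := notin_xy m m_ij; have := notin_xz m m_ij; rewrite !inE.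
  exact: F2_eq_of_neq.
by rewrite /coordcol !eq_at ?set21 ?set22.
Qed.

Lemma coordcol_transition : (2 < n)%N ->
  transition_edges (@H2 n) (coordcol i j)
  = [set p | agree p.1 p.2 \in [set [set i]; [set j]]].
Proof.
move=> n_gt2; apply/setP => -[x y]; rewrite [in RHS]inE /=; apply/idP/idP.
  move=> trans_xy; apply/negPn/negP => not_ij.
  have xy : H2 x y by move: trans_xy; rewrite inE => /andP [].
  have [z [xz nzy eq_zy]] := exists_nbr_same_coordcol n_gt2 xy not_ij.
  by have := transition_colour_unique (H2_irrefl n_gt1) trans_xy xz nzy; rewrite eq_zy eqxx.
case/set2P => agree_xy; rewrite inE H2_agree agree_xy cards1 /=.
  by apply: (coordcol_swapcol_proper (m := i)); rewrite ?set21.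
by apply: (coordcol_swapcol_proper (m := j)); rewrite ?set22.
Qed.

Lemma rb_coordcol : (2 < n)%N -> rb (@H2 n) (coordcol i j) = 2%:R / n.+1%:R.
Proof.
move=> n_gt2; apply: (rb_regular (@card_H2_nbhd n)) => [| x].
  by apply/card_gt0P; exists 0.
rewrite coordcol_transition //.
transitivity #|[set S | S \in [set [set i]; [set j]]]|.
  by rewrite -(card_agree x); apply: eq_card => y; rewrite !inE.
by rewrite cardsE cards2 (inj_eq set1_inj) neq_ij.
Qed.

End CoordinateColouring.

Lemma card_F2xF2 : #|{: 'F_2 * 'F_2}| = 4.
Proof. by rewrite card_prod card_Fp. Qed.

Definition colour4 (c : 'F_2 * 'F_2) : 'I_4 := cast_ord card_F2xF2 (enum_rank c).

Lemma colour4_inj : injective colour4.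
Proof. exact: inj_comp (@cast_ord_inj _ _ _) (@enum_rank_inj _). Qed.

Theorem proposition4p10 (n : nat) (i j : 'I_n) :
  (3 <= n)%N -> (i < j)%N ->
  [/\ proper_col (@H2 n) (coordcol i j),
      transition_edges (@H2 n) (coordcol i j)
        = [set p : vtx n * vtx n | (p.1 + p.2 == fv i) || (p.1 + p.2 == fv j)],
      rb (@H2 n) (coordcol i j) = 2%:R / (n.+1)%:R,
      (forall K' : vtx n -> 'I_4, proper_col (@H2 n) K' ->
         rb (@H2 n) K' <= 2%:R / (n.+1)%:R)
    & (exists2 K' : vtx n -> 'I_4, proper_col (@H2 n) K' &
         rb (@H2 n) K' = 2%:R / (n.+1)%:R)].
Proof.
move=> n_gt2 lt_ij; have neq_ij : i != j by rewrite neq_ltn lt_ij.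
split.
- exact: coordcol_proper.
- rewrite coordcol_transition //; apply/setP => -[x y].
  by rewrite !inE /= !addr_eq_fv.
- exact: rb_coordcol.
- move=> K properK; have n_gt1 : (1 < n)%N by apply: ltnW.
  have := rb_le_regular (@card_H2_nbhd n) (H2_irrefl n_gt1) properK.
  by rewrite card_ord; apply.
- exists (colour4 \o coordcol i j).
    by rewrite proper_col_comp ?coordcol_proper //; exact: colour4_inj.
  by rewrite rb_comp ?rb_coordcol //; exact: colour4_inj.
Qed.
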